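(* Let $n>(p+s)^4$ be an integer. For any $j \in \{1,2,\ldots,p-1\}$, the function $t\mapsto R_n(t+j/p)$ on $\mathbb{Z}_p$ belongs to $C^\dagger(\mathbb{Z}_p,\mathbb{Q}_p)$, and \[ v_p\left( \mathcal{L}_1\left( R_n\left( t+\frac{j}{p} \right) \right) \right) \geqslant (p+1+s)(n+1) + s \cdot v_p(n!) -M_0 - 3 - \left\lfloor \frac{\log (n+1)}{\log p} \right\rfloor. \]
   Context: Let $p\geqslant 5$ be a prime and $s$ a positive integer. Write $v_p$ for the $p$-adic valuation and $(\alpha)_k=\alpha(\alpha+1)\cdots(\alpha+k-1)$. Put $N_0=v_p(p-1+s)$ and $M_0=p^{2+N_0}s-1$. For an integer $n>(p+s)^4$ let \[R_n(t)=p^{pn}\, n!^s\, t^{M_0}\,\frac{\prod_{j=1}^{p-1}(t+\frac{j}{p})_n}{(t)_{n+1}^{p-1+s}}\in\mathbb{Q}(t).\] For $\rho>1$, $C^{\mathrm{an}}_\rho(\mathbb{Z}_p,\mathbb{Q}_p)$ is the set of functions $f(x)=\sum_{k\geqslant0}a_kx^k$ on $\mathbb{Z}_p$ with $a_k\in\mathbb{Q}_p$ and $|a_k|_p\rho^k\to0$, and $C^\dagger(\mathbb{Z}_p,\mathbb{Q}_p)=\bigcup_{\rho>1}C^{\mathrm{an}}_\rho(\mathbb{Z}_p,\mathbb{Q}_p)$. The first Bernoulli functional $\mathcal{L}_1:C^\dagger(\mathbb{Z}_p,\mathbb{Q}_p)\to\mathbb{Q}_p$ is $\mathcal{L}_1\left(\sum_{k\geqslant0}a_kt^k\right)=\sum_{k\geqslant0}a_k\frac{B_{k+1}}{k+1}$,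 where $B_m$ are the Bernoulli numbers ($\frac{t}{e^t-1}=\sum_m B_m\frac{t^m}{m!}$). *)

From HB Require Import structures.
From mathcomp Require Import all_boot all_order all_algebra.
Set Implicit Arguments. Unset Strict Implicit. Unset Printing Implicit Defensive.
Import Order.TTheory GRing.Theory Num.Theory.
Local Open Scope ring_scope.

(* p-adic valuation of a rational number (value 0 at x = 0, never used there) *)
Definition vp (p : nat) (x : rat) : int :=
  (logn p `|numq x|%N)%:Z - (logn p `|denq x|%N)%:Z.

Definition padic_abs (p : nat) (x : rat) : rat :=
  if x == 0 then 0 else (p%:R : rat) ^ (- vp p x).

(* Bernoulli numbers with t/(e^t-1) = sum B_m t^m/m!  (B_1 = -1/2):
   B_0 = 1, sum_{k=0}^{m} C(m+1,k) B_k = 0 for m >= 1. *)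
Fixpoint bern_seq (m : nat) : seq rat :=
  match m with
  | 0 => [:: 1]
  | m'.+1 => let s := bern_seq m' in
      rcons s (- (\sum_(k < m'.+1) ('C(m'.+2, k))%:R * s`_k) / (m'.+2)%:R)
  end.
Definition bernoulli (m : nat) : rat := (bern_seq m)`_m.

Definition N0 (p s : nat) : nat := logn p (p - 1 + s).
Definition M0 (p s : nat) : nat := (p ^ (2 + N0 p s) * s - 1)%N.

(* R_n(t) = Rnum / Rden with
   Rnum = p^(pn) n!^s t^M0 prod_{j=1}^{p-1} (t + j/p)_n,
   Rden = (t)_{n+1}^(p-1+s). *)
Definition Rnum (p s n : nat) : {poly rat} :=
  ((p ^ (p * n) * n`! ^ s)%N%:R)%:P * 'X ^+ (M0 p s) *
  \prod_(1 <= j < p) \prod_(i < n) ('X + ((j%:R / p%:R) + i%:R)%:P).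
Definition Rden (p s n : nat) : {poly rat} :=
  (\prod_(i < n.+1) ('X + (i%:R)%:P)) ^+ (p - 1 + s).

Definition shiftNum (p s n j : nat) : {poly rat} :=
  Rnum p s n \Po ('X + (j%:R / p%:R)%:P).
Definition shiftDen (p s n j : nat) : {poly rat} :=
  Rden p s n \Po ('X + (j%:R / p%:R)%:P).

(* power series sum_k a_k x^k lies in C^dagger(Z_p,Q_p):
   exists rho > 1 with |a_k|_p rho^k -> 0 *)
Definition in_Cdagger (p : nat) (a : nat -> rat) : Prop :=
  exists rho : rat, 1 < rho /\
    forall eps : rat, 0 < eps -> exists K : nat, forall k : nat,
      (K <= k)%N -> padic_abs p (a k) * rho ^+ k < eps.

(* partial sums of L_1(sum a_k t^k) = sum a_k B_{k+1}/(k+1) *)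
Definition L1_partial (a : nat -> rat) (N : nat) : rat :=
  \sum_(k < N) a k * bernoulli k.+1 / (k.+1)%:R.

Definition padic_cauchy (p : nat) (S : nat -> rat) : Prop :=
  forall M : int, exists K : nat, forall m1 m2 : nat,
    (K <= m1)%N -> (K <= m2)%N -> S m1 = S m2 \/ M <= vp p (S m1 - S m2).

Definition lemma6p1_bound (p s n : nat) : int :=
  ((p + 1 + s) * n.+1 + s * logn p n`!)%N%:Z - (M0 p s)%:Z - 3
  - (trunc_log p n.+1)%:Z.

From HB Require Import structures.
From mathcomp Require Import all_boot all_order all_algebra.
From mathcomp Require Import zify ring.
Set Implicit Arguments. Unset Strict Implicit. Unset Printing Implicit Defensive.
Import Order.TTheory GRing.Theory Num.Theory.
Local Open Scope ring_scope.

(* Write R_n(t + j/p) = N(t) / D(t) with N, D polynomials over Q.  All roots of D,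
   and all roots of N except the n integral roots of the factor
   (t + j/p + (p-j)/p)_n, have p-adic valuation -1; hence
   v_p(N_k) >= v_p(p^(pn) n!^s) - (M0 + (p-2)n) + (k - n)_+ and
   v_p(D_k) >= k - d with v_p(D_0) = -d, d = (p-1+s)(n+1).  Comparing coefficients
   in N = D * a gives, by strong induction, v_p(a_k) >= A + (k - n)_+ for the
   Taylor coefficients a_k of R_n(t + j/p), where A is the sum of these constants.
   As v_p(B_m) >= -1 (proved from Faulhaber's formula), every term
   a_k B_(k+1)/(k+1) of L_1 has valuation at least
   A - 1 + (k - n)_+ - log_p(k+1) >= A - 1 - floor(log_p(n+1)), which is the
   stated bound; the linear growth of v_p(a_k) in k gives both the overconvergence
   (with rho = p/2) and the p-adic convergence of the series defining L_1. *)

(** * Bernoulli numbers and sums of powers *)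

Lemma mul_bin_subC n k l : ('C(n, k) * 'C(n - k, l) = 'C(n, l) * 'C(n - l, k))%N.
Proof.
have vanish k' l' : (n < k' + l')%N -> ('C(n, k') * 'C(n - k', l') = 0)%N.
  move=> nkl; have [kn|/bin_small->] := leqP k' n; last by [].
  by rewrite (@bin_small (n - k')) ?muln0 //; lia.
have [kln|nkl] := leqP (k + l) n; last by rewrite !vanish // addnC.
have fk := bin_fact (leq_trans (leq_addr l k) kln).
have fl := bin_fact (leq_trans (leq_addl k l) kln).
have fkl : ('C(n - k, l) * (l`! * (n - k - l)`!) = (n - k)`!)%N by apply: bin_fact; lia.
have flk : ('C(n - l, k) * (k`! * (n - k - l)`!) = (n - l)`!)%N.
  by rewrite (_ : (n - k - l = n - l - k)%N); [apply: bin_fact|]; lia.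
have facts_gt0 : (0 < k`! * l`! * (n - k - l)`!)%N by rewrite !muln_gt0 !fact_gt0.
apply/eqP; rewrite -(eqn_pmul2r facts_gt0); apply/eqP.
transitivity ('C(n, k) * (k`! * ('C(n - k, l) * (l`! * (n - k - l)`!))))%N; first by ring.
rewrite fkl fk -fl -flk; ring.
Qed.

Lemma size_bern_seq m : size (bern_seq m) = m.+1.
Proof. by elim: m => //= m IH; rewrite size_rcons IH. Qed.

Lemma nth_bern_seq m k : (k <= m)%N -> (bern_seq m)`_k = bernoulli k.
Proof.
elim: m => [|m IH]; first by rewrite leqn0 => /eqP ->.
rewrite leq_eqVlt => /predU1P [-> //|km].
by rewrite /= nth_rcons size_bern_seq km IH.
Qed.

Lemma bernoulliS m : bernoulli m.+1 =
  - (\sum_(k < m.+1) 'C(m.+2, k)%:R * bernoulli k) / m.+2%:R.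
Proof.
rewrite {1}/bernoulli /= nth_rcons size_bern_seq ltnn eqxx.
by congr (- _ / _); apply: eq_bigr => k _; rewrite nth_bern_seq // -ltnS.
Qed.

Lemma sum_bin_bernoulli m : \sum_(k < m.+1) 'C(m, k)%:R * bernoulli k =
  bernoulli m + (m == 1)%:R.
Proof.
case: m => [|[|m]]; first by rewrite big_ord1 mul1r addr0.
  by rewrite !big_ord_recr big_ord0 /= bernoulliS big_ord1 /bernoulli /= !bin0 binn; field.
rewrite big_ord_recr big_ord_recr /= binn binSn mul1r addr0 bernoulliS.
by rewrite mulrCA mulfV ?pnatr_eq0 // mulr1 addrN add0r.
Qed.

Lemma sum_bin_widen (R : pzSemiRingType) m n (F : nat -> R) : (m <= n)%N ->
  \sum_(k < n.+1) 'C(m, k)%:R * F k = \sum_(k < m.+1) 'C(m, k)%:R * F k.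
Proof.
move=> mn; rewrite [RHS](big_ord_widen n.+1 (fun k => 'C(m, k)%:R * F k)) //.
rewrite [RHS]big_mkcond; apply: eq_bigr => k _.
by case: ltnP => // mk; rewrite bin_small ?mul0r.
Qed.

Lemma exprD1n_widen (R : pzSemiRingType) (x : R) m n : (m <= n)%N ->
  (x + 1) ^+ m = \sum_(i < n.+1) 'C(m, i)%:R * x ^+ i.
Proof.
move=> mn; rewrite exprD1n (sum_bin_widen (fun i => x ^+ i) mn).
by apply: eq_bigr => i _; rewrite mulr_natl.
Qed.

Definition bernpoly (n : nat) (x : rat) : rat :=
  \sum_(k < n.+1) 'C(n, k)%:R * bernoulli k * x ^+ (n - k).

Lemma bernpoly0 n : bernpoly n 0 = bernoulli n.
Proof.
rewrite /bernpoly big_ord_recr /= subnn binn mul1r mulr1 big1 ?add0r // => k _.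
by rewrite expr0n subn_eq0 leqNgt ltn_ord mulr0.
Qed.

Lemma bernpolyD1E n x : bernpoly n (x + 1) =
  \sum_(l < n.+1) 'C(n, l)%:R * x ^+ l * \sum_(k < n.+1) 'C(n - l, k)%:R * bernoulli k.
Proof.
transitivity (\sum_(k < n.+1) \sum_(l < n.+1)
    ('C(n, k) * 'C(n - k, l))%:R * bernoulli k * x ^+ l).
  apply: eq_bigr => k _; rewrite (exprD1n_widen x (leq_subr k n)) mulr_sumr.
  by apply: eq_bigr => l _; rewrite natrM; ring.
rewrite exchange_big /=; apply: eq_bigr => l _; rewrite mulr_sumr.
by apply: eq_bigr => k _; rewrite mul_bin_subC natrM; ring.
Qed.

Lemma bernpolyD1 n x : (0 < n)%N -> bernpoly n (x + 1) = bernpoly n x + n%:R * x ^+ n.-1.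
Proof.
move=> n_gt0; rewrite bernpolyD1E.
rewrite (eq_bigr (fun l : 'I_n.+1 => 'C(n, l)%:R * x ^+ l * bernoulli (n - l) +
    'C(n, l)%:R * x ^+ l * (n - l == 1)%N%:R)) => [|l _]; last first.
  by rewrite (sum_bin_widen bernoulli) ?leq_subr // sum_bin_bernoulli mulrDr.
rewrite big_split /=; congr (_ + _).
  rewrite (reindex_inj rev_ord_inj) /=; apply: eq_bigr => k _.
  have kn : (k <= n)%N by rewrite -ltnS.
  by rewrite subSS subKn // bin_sub //; ring.
case: n n_gt0 => // n _ /=.
rewrite big_ord_recr big_ord_recr /= subnn subSnn mulr0 addr0 binSn big1 ?add0r ?mulr1 //.
by move=> k _; rewrite (_ : (n.+1 - k == 1)%N = false) ?mulr0 //; have := ltn_ord k; lia.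
Qed.

Lemma sum_powers_bernpoly m N : m.+1%:R * \sum_(x < N) x%:R ^+ m =
  bernpoly m.+1 N%:R - bernoulli m.+1.
Proof.
elim: N => [|N IH]; first by rewrite big_ord0 mulr0 bernpoly0 subrr.
by rewrite big_ord_recr /= mulrDr IH -(natr1 N) bernpolyD1 //=; ring.
Qed.

Lemma mul_bernoulli_sum_powers N m : N%:R * bernoulli m =
  \sum_(x < N) x%:R ^+ m -
  \sum_(k < m) 'C(m, k)%:R * (N%:R ^+ (m - k) / (m.+1 - k)%:R) * (N%:R * bernoulli k).
Proof.
have := sum_powers_bernpoly m N; rewrite /bernpoly big_ord_recr /= subnn expr0.
rewrite binn mul1r mulr1 addrK big_ord_recr /= binSn subSn // subnn expr1.
have binS (k : 'I_m) : 'C(m.+1, k)%:R * bernoulli k * N%:R ^+ (m.+1 - k) =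
    m.+1%:R * ('C(m, k)%:R * (N%:R ^+ (m - k) / (m.+1 - k)%:R) * (N%:R * bernoulli k)) :> rat.
  have km := ltnW (ltn_ord k).
  have mk0 : (m.+1 - k)%:R != 0 :> rat by rewrite pnatr_eq0 subn_eq0 -ltnNge ltnS.
  have binE : 'C(m.+1, k)%:R = m.+1%:R * 'C(m, k)%:R / (m.+1 - k)%:R :> rat.
    by rewrite -!natrM mul_bin_down mulnC natrM mulfK.
  by rewrite binE subSn // exprS; ring.
rewrite (eq_bigr _ (fun k _ => binS k)) -mulr_sumr -mulrA -mulrDr.
have m1_neq0 : m.+1%:R != 0 :> rat by rewrite pnatr_eq0.
by move=> /(mulfI m1_neq0) ->; ring.
Qed.

(** * Quotients of power series *)

Section SeriesQuotient.
Variables (F : fieldType) (N D : {poly F}).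

(* Coefficients 0, ..., k of the power series N/D, from comparing coefficients
   in N = D * (N/D). *)
Fixpoint quot_seq (k : nat) : seq F :=
  if k is k'.+1 then
    let s := quot_seq k' in
    rcons s ((N`_k'.+1 - \sum_(i < k'.+1) D`_(k'.+1 - i) * s`_i) / D`_0)
  else [:: N`_0 / D`_0].

Definition series_quot (k : nat) : F := (quot_seq k)`_k.

Lemma size_quot_seq k : size (quot_seq k) = k.+1.
Proof. by elim: k => //= k IH; rewrite size_rcons IH. Qed.

Lemma nth_quot_seq k i : (i <= k)%N -> (quot_seq k)`_i = series_quot i.
Proof.
elim: k => [|k IH]; first by rewrite leqn0 => /eqP ->.
rewrite leq_eqVlt => /predU1P [-> //|ik].
by rewrite /= nth_rcons size_quot_seq ik IH.
Qed.

Lemma series_quotE k :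
  series_quot k = (N`_k - \sum_(i < k) D`_(k - i) * series_quot i) / D`_0.
Proof.
case: k => [|k]; first by rewrite big_ord0 subr0.
rewrite {1}/series_quot /= nth_rcons size_quot_seq ltnn eqxx.
by congr ((_ - _) / _); apply: eq_bigr => i _; rewrite nth_quot_seq // -ltnS.
Qed.

Lemma series_quotP k : D`_0 != 0 ->
  \sum_(i < k.+1) D`_(k - i) * series_quot i = N`_k.
Proof.
move=> D0; rewrite big_ord_recr /= subnn [series_quot k]series_quotE.
by rewrite mulrCA mulfV // mulr1 addrC subrK.
Qed.

End SeriesQuotient.

Lemma comp_XaddC (R : comNzRingType) (c d : R) :
  ('X + d%:P) \Po ('X + c%:P) = 'X + (c + d)%:P.
Proof. by rewrite comp_polyD comp_polyX comp_polyC polyCD addrA. Qed.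

(** * Lower bounds for p-adic valuations *)

Section PadicValuation.
Variable p : nat.
Hypothesis p_prime : prime p.

Definition p_integral (x : rat) : Prop :=
  exists (a : int) (b : nat), ~~ (p %| b)%N /\ x = a%:~R / b%:R.

(* [vp_ge M x] means v_p(x) >= M, and holds for x = 0 whatever M. *)
Definition vp_ge (M : int) (x : rat) : Prop := p_integral (x / p%:R ^ M).

Lemma natr_p_neq0 : (p%:R : rat) != 0.
Proof. by rewrite pnatr_eq0 -lt0n prime_gt0. Qed.

Lemma p_integral_int (a : int) : p_integral a%:~R.
Proof.
exists a, 1%N; split; last by rewrite divr1.
by rewrite dvdn1 neq_ltn prime_gt1 ?orbT.
Qed.

Lemma p_integral_nat (m : nat) : p_integral m%:R.
Proof. exact: (p_integral_int m). Qed.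

Lemma p_integral_invn (b : nat) : ~~ (p %| b)%N -> p_integral b%:R^-1.
Proof. by move=> pNb; exists 1, b; rewrite mul1r. Qed.

Lemma p_integralD x y : p_integral x -> p_integral y -> p_integral (x + y).
Proof.
move=> [a [b [pNb ->]]] [c [d [pNd ->]]].
exists (a * d%:Z + c * b%:Z), (b * d)%N; split; first by rewrite Euclid_dvdM // negb_or pNb.
have b0 : (b%:R : rat) != 0 by apply: contraNneq pNb => /eqP; rewrite pnatr_eq0 => /eqP ->.
have d0 : (d%:R : rat) != 0 by apply: contraNneq pNd => /eqP; rewrite pnatr_eq0 => /eqP ->.
by rewrite natrM rmorphD !rmorphM /=; field; rewrite b0 d0.
Qed.

Lemma p_integralM x y : p_integral x -> p_integral y -> p_integral (x * y).
Proof.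
move=> [a [b [pNb ->]]] [c [d [pNd ->]]].
exists (a * c), (b * d)%N; split; first by rewrite Euclid_dvdM // negb_or pNb.
by rewrite natrM rmorphM invfM mulrACA.
Qed.

Lemma p_integralN x : p_integral x -> p_integral (- x).
Proof. by rewrite -mulN1r; apply: p_integralM (p_integral_int (-1)). Qed.

Lemma vp_ge0P x : vp_ge 0 x <-> p_integral x.
Proof. by rewrite /vp_ge expr0z divr1. Qed.

Lemma vp_ge_nat M (m : nat) : M <= 0 -> vp_ge M m%:R.
Proof.
case: M => [[|//] _|k _]; first by apply/vp_ge0P/p_integral_nat.
rewrite /vp_ge NegzE -invr_expz invrK -exprnP -natrX -natrM.
exact: p_integral_nat.
Qed.

Lemma vp_ge_zero M : vp_ge M 0.
Proof. by rewrite /vp_ge mul0r; apply: (p_integral_nat 0). Qed.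

Lemma vp_geD M x y : vp_ge M x -> vp_ge M y -> vp_ge M (x + y).
Proof. by rewrite /vp_ge mulrDl; apply: p_integralD. Qed.

Lemma vp_geN M x : vp_ge M x -> vp_ge M (- x).
Proof. by rewrite /vp_ge mulNr; apply: p_integralN. Qed.

Lemma vp_geB M x y : vp_ge M x -> vp_ge M y -> vp_ge M (x - y).
Proof. by move=> vx vy; apply: vp_geD vx (vp_geN vy). Qed.

Lemma vp_ge_sum (I : Type) (r : seq I) (P : pred I) (F : I -> rat) M :
  (forall i, P i -> vp_ge M (F i)) -> vp_ge M (\sum_(i <- r | P i) F i).
Proof. by move=> vF; apply: big_ind => //; [apply: vp_ge_zero | apply: vp_geD]. Qed.

Lemma p_integral_sum (I : Type) (r : seq I) (P : pred I) (F : I -> rat) :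
  (forall i, P i -> p_integral (F i)) -> p_integral (\sum_(i <- r | P i) F i).
Proof. by move=> iF; apply/vp_ge0P/vp_ge_sum => i /iF/vp_ge0P. Qed.

Lemma vp_geM M N x y : vp_ge M x -> vp_ge N y -> vp_ge (M + N) (x * y).
Proof.
rewrite /vp_ge expfzDr ?natr_p_neq0 // invfM mulrACA.
exact: p_integralM.
Qed.

Lemma vp_ge_prod m (F : nat -> rat) d :
  (forall i, vp_ge d (F i)) -> vp_ge (d * m%:Z) (\prod_(i < m) F i).
Proof.
move=> vF; elim: m => [|m IH]; first by rewrite big_ord0 mulr0; apply: vp_ge_nat 1%N _.
by rewrite big_ord_recr /= -addn1 PoszD mulrDr mulr1; apply: vp_geM.
Qed.

Lemma vp_geX d x e : vp_ge d x -> vp_ge (d * e%:Z) (x ^+ e).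
Proof.
move=> vx; elim: e => [|e IH]; first by rewrite expr0 mulr0; apply: vp_ge_nat 1%N _.
by rewrite exprSr -addn1 PoszD mulrDr mulr1; apply: vp_geM.
Qed.

Lemma vp_ge_le M N x : N <= M -> vp_ge M x -> vp_ge N x.
Proof.
move=> NM vx; have -> : N = M + (N - M) by ring.
by rewrite -[x]mulr1; apply: vp_geM vx (vp_ge_nat 1 _); rewrite subr_le0.
Qed.

Lemma vp_ge_expz M : vp_ge M (p%:R ^ M).
Proof. by rewrite /vp_ge divff ?expfz_neq0 ?natr_p_neq0 //; apply/vp_ge0P/(p_integral_nat 1). Qed.

Lemma vp_ge_divp (a : nat) : vp_ge (-1) (a%:R / p%:R).
Proof.
have -> : (-1 : int) = 0 + (-1) by [].
apply: vp_geM; first exact: vp_ge_nat.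
by have := vp_ge_expz (-1); rewrite -invr_expz expr1z.
Qed.

Lemma vp_ge_logn m : (0 < m)%N -> vp_ge (logn p m) m%:R.
Proof.
move=> m0; have [u _ {2}->] := pfactor_coprime p_prime m0.
rewrite /vp_ge natrM natrX exprnP mulfK ?expfz_neq0 ?natr_p_neq0 //.
exact: p_integral_nat.
Qed.

Lemma vp_ge_invn_logn m : (0 < m)%N -> vp_ge (- (logn p m)%:Z) m%:R^-1.
Proof.
move=> m0; have [u pu {2}->] := pfactor_coprime p_prime m0.
rewrite /vp_ge -invr_expz invrK natrM natrX exprnP invfM mulfVK ?expfz_neq0 ?natr_p_neq0 //.
by apply: p_integral_invn; rewrite -prime_coprime // coprime_sym.
Qed.

Lemma vp_frac (a : int) (b : nat) : a != 0 -> (0 < b)%N ->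
  vp p (a%:~R / b%:R) = (logn p `|a|%N)%:Z - (logn p b)%:Z.
Proof.
move=> a0 b0; set x := a%:~R / b%:R.
have x0 : x != 0 by rewrite mulf_neq0 ?intr_eq0 // invr_eq0 pnatr_eq0 -lt0n.
have cross : numq x * b%:Z = a * denq x.
  apply: (@intr_inj rat); rewrite !rmorphM /=; apply/eqP.
  rewrite -eqr_div ?intr_eq0 ?denq_neq0 ?pnatr_eq0 -?lt0n //.
  by rewrite divq_num_den.
have := congr1 (fun z : int => logn p `|z|%N) cross.
have n0 : (0 < `|numq x|)%N by rewrite absz_gt0 numq_eq0.
have d0 : (0 < `|denq x|)%N by rewrite absz_gt0 denq_neq0.
rewrite /= !abszM !lognM ?absz_gt0 //= /vp; lia.
Qed.

Lemma vp_ge_vp M x : vp_ge M x -> x != 0 -> M <= vp p x.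
Proof.
move=> [a [b [pNb xE]]] x0.
have b0 : (0 < b)%N by case: b pNb {xE} => //; rewrite dvdn0.
have logb : logn p b = 0%N by rewrite logn_coprime // prime_coprime.
have a0 : a != 0 by apply: contraNneq x0 => a0; move/eqP: xE;
  rewrite a0 mul0r mulf_eq0 invr_eq0 expfz_eq0 (negbTE natr_p_neq0) andbF orbF.
have {xE} -> : x = a%:~R / b%:R * p%:R ^ M by rewrite -xE mulfVK ?expfz_neq0 ?natr_p_neq0.
have pXgt0 m : (0 < p ^ m)%N by rewrite expn_gt0 prime_gt0.
have pXz m : (p ^ m)%N%:Z != 0 by apply: lt0r_neq0; rewrite ltz_nat pXgt0.
case: M => m.
- rewrite -exprnP -natrX mulrAC -[(p ^ m)%:R]/((Posz (p ^ m))%:~R) -rmorphM /=.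
  rewrite vp_frac ?mulf_neq0 // abszM lognM ?absz_gt0 //=.
  rewrite pfactorK // logb; lia.
- rewrite NegzE -invr_expz -exprnP -natrX -mulrA -invfM -natrM.
  rewrite vp_frac ?muln_gt0 ?b0 ?pXgt0 // lognM // pfactorK // logb; lia.
Qed.

Lemma vp_ge_vp0 M x : vp_ge M x -> x = 0 \/ M <= vp p x.
Proof. by move=> vx; have [->|x0] := eqVneq x 0; [left | right; apply: vp_ge_vp]. Qed.

Lemma padic_abs_le M x : vp_ge M x -> padic_abs p x <= p%:R ^ (- M).
Proof.
move=> vx; rewrite /padic_abs; have [_|x0] := eqVneq x 0; first exact: exprz_ge0.
by rewrite ler_weXz2l ?ler1n ?prime_gt0 // lerN2 vp_ge_vp.
Qed.

Lemma p_integral_mul_bernoulli m : p_integral (p%:R * bernoulli m).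
Proof.
elim/ltn_ind: m => m IH; rewrite mul_bernoulli_sum_powers.
apply: p_integralD.
  by apply: p_integral_sum => x _; rewrite -natrX; apply: p_integral_nat.
apply/p_integralN/p_integral_sum => k _.
apply: p_integralM (IH k (ltn_ord k)); apply: p_integralM; first exact: p_integral_nat.
have km : (k < m)%N := ltn_ord k.
have mk0 : (0 < m.+1 - k)%N by rewrite subn_gt0 ltnS ltnW.
apply/vp_ge0P/(@vp_ge_le ((m - k)%N%:Z - (logn p (m.+1 - k))%:Z)).
  by have := ltn_logl p mk0; lia.
by apply: vp_geM; [rewrite exprnP; apply: vp_ge_expz | apply: vp_ge_invn_logn].
Qed.

Lemma vp_ge_bernoulli m : vp_ge (-1) (bernoulli m).
Proof.
rewrite /vp_ge -invr_expz expr1z invrK mulrC.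
exact: p_integral_mul_bernoulli.
Qed.

Definition coef_vp_ge (P : {poly rat}) (C : int) (g : nat) : Prop :=
  forall k, vp_ge (C + (k - g)%N%:Z) P`_k.

Definition vp_factor (Q : {poly rat}) (d g : nat) : Prop :=
  forall P C h, coef_vp_ge P C h -> coef_vp_ge (P * Q) (C - d%:Z) (h + g).

Lemma coef_vp_geC c C : vp_ge C c -> coef_vp_ge c%:P C 0.
Proof. by move=> vc [|k]; rewrite coefC /= ?addr0 //; apply: vp_ge_zero. Qed.

Lemma coef_mulXC (P : {poly rat}) r k :
  (P * ('X + r%:P))`_k = (if k is k'.+1 then P`_k' else 0) + P`_k * r.
Proof. by rewrite mulrDr coefD coefMX coefMC; case: k. Qed.

Lemma vp_factorXC_int r : vp_ge 0 r -> vp_factor ('X + r%:P) 0 1.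
Proof.
move=> vr P C h vP k; rewrite coef_mulXC subr0.
apply: vp_geD; last by rewrite -[_ + _]addr0; apply: vp_ge_le (vp_geM (vP k) vr); lia.
by case: k => [|k]; [apply: vp_ge_zero | rewrite addn1 subSS].
Qed.

Lemma vp_factorXC r : vp_ge (-1) r -> vp_factor ('X + r%:P) 1 0.
Proof.
move=> vr P C h vP k; rewrite coef_mulXC addn0.
apply: vp_geD; last by apply: vp_ge_le (vp_geM (vP k) vr); lia.
by case: k => [|k]; [apply: vp_ge_zero | apply: vp_ge_le (vP k); lia].
Qed.

Lemma vp_factor1 : vp_factor 1 0 0.
Proof. by move=> P C h vP; rewrite mulr1 subr0 addn0. Qed.

Lemma vp_factorM Q1 Q2 d1 d2 g1 g2 : vp_factor Q1 d1 g1 -> vp_factor Q2 d2 g2 ->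
  vp_factor (Q1 * Q2) (d1 + d2) (g1 + g2).
Proof.
by move=> vQ1 vQ2 P C h /vQ1/vQ2; rewrite mulrA addnA PoszD opprD addrA.
Qed.

Lemma vp_factor_prod (I : Type) (r : seq I) (Q : I -> {poly rat}) d g :
  (forall i, vp_factor (Q i) d g) -> vp_factor (\prod_(i <- r) Q i) (d * size r) (g * size r).
Proof.
move=> vQ; elim: r => [|i r IH]; first by rewrite big_nil !muln0; apply: vp_factor1.
by rewrite big_cons /= !mulnS; apply: vp_factorM.
Qed.

Lemma vp_factor_prod_ord m (Q : 'I_m -> {poly rat}) d g :
  (forall i, vp_factor (Q i) d g) -> vp_factor (\prod_(i < m) Q i) (d * m) (g * m).
Proof. by move/(vp_factor_prod (index_enum 'I_m)); rewrite [index_enum _]unlock -enumT size_enum_ord. Qed.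

Lemma vp_factorX Q d g e : vp_factor Q d g -> vp_factor (Q ^+ e) (d * e) (g * e).
Proof.
move=> vQ; elim: e => [|e IH]; first by rewrite expr0 !muln0; apply: vp_factor1.
by rewrite exprS !mulnS; apply: vp_factorM.
Qed.

Lemma vp_factor_prod_nat a b (Q : nat -> {poly rat}) d g :
  (forall i, vp_factor (Q i) d g) ->
  vp_factor (\prod_(a <= i < b) Q i) (d * (b - a)) (g * (b - a)).
Proof. by move/(vp_factor_prod (index_iota a b)); rewrite size_iota. Qed.

Lemma coef_vp_ge_mono P C C' h h' :
  C' <= C -> (h <= h')%N -> coef_vp_ge P C h -> coef_vp_ge P C' h'.
Proof. by move=> CC' hh' vP k; apply: vp_ge_le (vP k); lia. Qed.

Lemma vp_ge_series_quot N D c g d :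
  coef_vp_ge N c g -> coef_vp_ge D (- d%:Z) 0 -> vp_ge d (D`_0)^-1 ->
  forall k, vp_ge (c + d%:Z + (k - g)%N%:Z) (series_quot N D k).
Proof.
move=> vN vD vD0; elim/ltn_ind => k IH; rewrite series_quotE.
apply: vp_ge_le (vp_geM (M := c + (k - g)%N%:Z) _ vD0); first by lia.
apply: vp_geB; first exact: vN.
apply: vp_ge_sum => i _; apply: vp_ge_le (vp_geM (vD _) (IH i (ltn_ord i))).
by have := ltn_ord i; lia.
Qed.

Lemma in_Cdagger_vp_ge (a : nat -> rat) c :
  (2 < p)%N -> (forall k, vp_ge (c + k%:Z) (a k)) -> in_Cdagger p a.
Proof.
move=> p_gt2 va; exists (p%:R / 2); split; first by rewrite ltr_pdivlMr // mul1r ltr_nat.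
move=> eps eps_gt0; set Q : rat := p%:R ^ (- c).
have Q_gt0 : 0 < Q by rewrite exprz_gt0 // ltr0n prime_gt0.
exists (Num.bound (Q / eps)) => k Kk.
have abs_le : padic_abs p (a k) * (p%:R / 2) ^+ k <= Q / 2 ^+ k.
  rewrite (_ : Q / 2 ^+ k = p%:R ^ (- (c + k%:Z)) * (p%:R / 2) ^+ k).
    by rewrite ler_wpM2r ?exprn_ge0 ?divr_ge0 // padic_abs_le.
  rewrite opprD expfzDr ?natr_p_neq0 // -/Q -[p%:R ^ (- k%:Z)]invr_expz -exprnP expr_div_n.
  by field; rewrite !expf_neq0 ?natr_p_neq0.
apply: (le_lt_trans abs_le); apply: (@le_lt_trans _ _ (Q / k.+1%:R)).
  rewrite ler_pM2l // lef_pV2 ?posrE ?exprn_gt0 ?ltr0n // -natrX ler_nat.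
  exact: ltn_expl.
rewrite ltr_pdivrMr ?ltr0n // mulrC -ltr_pdivrMr //.
apply: (lt_le_trans (archi_boundP (ltW (divr_gt0 Q_gt0 eps_gt0)))).
by rewrite ler_nat ltnS ltnW.
Qed.

Lemma padic_cauchy_vp_ge (t : nat -> rat) (f : nat -> int) :
  (forall k, vp_ge (f k) (t k)) ->
  (forall M, exists K, forall k, (K <= k)%N -> M <= f k) ->
  padic_cauchy p (fun m => \sum_(k < m) t k).
Proof.
move=> vt f_unbounded M; have [K fK] := f_unbounded M; exists K.
have vdiff m1 m2 : (K <= m2 <= m1)%N -> vp_ge M (\sum_(k < m1) t k - \sum_(k < m2) t k).
  case/andP=> Km2 m21; rewrite -!(big_mkord xpredT) (big_cat_nat (leq0n m2) m21) /=.
  rewrite addrC addrK big_nat_cond; apply: vp_ge_sum => k /andP [/andP [m2k _] _].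
  by apply: vp_ge_le (vt k); apply: fK (leq_trans Km2 m2k).
move=> m1 m2 Km1 Km2.
have vdiff12 : vp_ge M (\sum_(k < m1) t k - \sum_(k < m2) t k).
  have [m21|/ltnW m12] := leqP m2 m1; first by apply: vdiff; rewrite Km2.
  by rewrite -opprB; apply/vp_geN/vdiff; rewrite Km1.
by case: (vp_ge_vp0 vdiff12) => [/subr0_eq|]; [left|right].
Qed.

Lemma logn_double_leq m : (2 * logn p m <= m)%N.
Proof.
case: m => [|m]; first by rewrite logn0.
apply: leq_trans (dvdn_leq (ltn0Sn m) (pfactor_dvdnn p m.+1)).
case: (logn p m.+1) => // e; rewrite expnS.
by apply: leq_mul; [apply: prime_gt1 | apply: ltn_expl; apply: prime_gt1].
Qed.

Lemma logn_leq_trunc_log m : (0 < m)%N -> (logn p m <= trunc_log p m)%N.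
Proof.
move=> m_gt0; apply: trunc_log_max; first exact: prime_gt1.
exact: dvdn_leq m_gt0 (pfactor_dvdnn p m).
Qed.

Lemma trunc_log_mulX m d : (0 < m)%N -> trunc_log p (m * p ^ d) = (trunc_log p m + d)%N.
Proof.
move=> m_gt0; elim: d => [|d IH]; first by rewrite muln1 addn0.
rewrite expnS mulnCA trunc_logMp ?prime_gt1 ?IH ?addnS //.
by rewrite muln_gt0 m_gt0 expn_gt0 prime_gt0.
Qed.

Lemma logn_leq_trunc_logS n k : (logn p k.+1 <= trunc_log p n.+1 + (k - n))%N.
Proof.
apply: leq_trans (logn_leq_trunc_log (ltn0Sn k)) _.
rewrite -trunc_log_mulX //; apply: leq_trunc_log.
have := ltn_expl (k - n) (prime_gt1 p_prime); nia.
Qed.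

(** * Taylor coefficients of R_n(t + j/p) *)

Section ShiftedRn.
Variables s n j : nat.
Hypothesis j_range : (1 <= j <= p - 1)%N.

Let c : rat := j%:R / p%:R.

Let j_gt0 : (0 < j)%N. Proof. by case/andP: j_range. Qed.

Let j_lt_p : (j < p)%N.
Proof. by have := prime_gt0 p_prime; case/andP: j_range => _; lia. Qed.

Lemma shiftNumE : shiftNum p s n j =
  (p ^ (p * n) * n`! ^ s)%N%:R%:P * ('X + c%:P) ^+ M0 p s *
  \prod_(1 <= i < p) \prod_(t < n) ('X + (c + (i%:R / p%:R + t%:R))%:P).
Proof.
rewrite /shiftNum /Rnum !comp_polyM comp_polyC comp_Xn_poly rmorph_prod.
by congr (_ * _); apply: eq_bigr => i _; rewrite rmorph_prod /=; apply: eq_bigr => t _; rewrite comp_XaddC.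
Qed.

Lemma shiftDenE : shiftDen p s n j = (\prod_(t < n.+1) ('X + (c + t%:R)%:P)) ^+ (p - 1 + s).
Proof.
rewrite /shiftDen /Rden rmorphXn rmorph_prod /=.
by congr (_ ^+ _); apply: eq_bigr => t _; rewrite comp_XaddC.
Qed.

Lemma vp_ge_shifted_root i t : vp_ge (-1) (c + (i%:R / p%:R + t%:R)).
Proof. by do 2 (apply: vp_geD; first exact: vp_ge_divp); apply: vp_ge_nat. Qed.

Lemma shifted_root_int t : c + ((p - j)%:R / p%:R + t%:R) = t.+1%:R.
Proof.
by rewrite /c (natrB _ (ltnW j_lt_p)) -natr1; field; apply: natr_p_neq0.
Qed.

(* Of the factors (t + c + i/p)_n, only the one with i = p - j has integral roots. *)
Lemma coef_vp_ge_shiftNum :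
  coef_vp_ge (shiftNum p s n j)
    ((p * n + s * logn p n`!)%N%:Z - (M0 p s + (p - 2) * n)%N%:Z) n.
Proof.
have lo : (1 <= p - j)%N by rewrite subn_gt0.
have hi : (p - j < p)%N by rewrite ltn_subrL j_gt0 prime_gt0.
rewrite shiftNumE (big_cat_nat lo (ltnW hi)) (big_ltn hi) /= !mulrA.
have vCst : vp_ge (p * n + s * logn p n`!)%N (p ^ (p * n) * n`! ^ s)%N%:R.
  have pX_gt0 : (0 < p ^ (p * n))%N by rewrite expn_gt0 prime_gt0.
  have fX_gt0 : (0 < n`! ^ s)%N by rewrite expn_gt0 fact_gt0.
  have -> : (p * n + s * logn p n`!)%N = logn p (p ^ (p * n) * n`! ^ s).
    by rewrite lognM // pfactorK // lognX.
  by apply: vp_ge_logn; rewrite muln_gt0 pX_gt0.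
have vbad i : vp_factor (\prod_(t < n) ('X + (c + (i%:R / p%:R + t%:R))%:P)) n 0.
  by have := vp_factor_prod_ord (fun t : 'I_n => vp_factorXC (vp_ge_shifted_root i t));
    rewrite mul1n mul0n.
have vgood : vp_factor (\prod_(t < n) ('X + (c + ((p - j)%:R / p%:R + t%:R))%:P)) 0 n.
  have vroot t : vp_ge 0 (c + ((p - j)%:R / p%:R + t%:R)) by rewrite shifted_root_int; apply: vp_ge_nat.
  by have := vp_factor_prod_ord (fun t : 'I_n => vp_factorXC_int (vroot t)); rewrite mul0n mul1n.
have vc : vp_ge (-1) c by rewrite /c; apply: vp_ge_divp.
move: (coef_vp_geC vCst) => /(vp_factorX (M0 p s) (vp_factorXC vc)).
move=> /(vp_factor_prod_nat 1 (p - j) vbad) /vgood /(vp_factor_prod_nat (p - j).+1 p vbad).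
have bad_count : (n * (p - j - 1) + n * (p - (p - j).+1) = (p - 2) * n)%N.
  by rewrite -mulnDr mulnC; congr (_ * _); lia.
by apply: coef_vp_ge_mono; lia.
Qed.

Lemma coef_vp_ge_shiftDen : coef_vp_ge (shiftDen p s n j) (- ((p - 1 + s) * n.+1)%N%:Z) 0.
Proof.
have vroot t : vp_factor ('X + (c + t%:R)%:P) 1 0.
  by apply/vp_factorXC/vp_geD; [apply: vp_ge_divp | apply: vp_ge_nat].
have := vp_factorX (p - 1 + s) (vp_factor_prod_ord (fun t : 'I_n.+1 => vroot t)).
move=> /(_ _ _ _ (coef_vp_geC (vp_ge_nat 1 (lexx 0) : vp_ge 0 1))).
rewrite polyC1 mul1r -shiftDenE mul1n !mul0n mulnC.
by apply: coef_vp_ge_mono; lia.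
Qed.

Lemma shiftDen_coef0 : (shiftDen p s n j)`_0 = (\prod_(t < n.+1) (c + t%:R)) ^+ (p - 1 + s).
Proof.
rewrite -horner_coef0 shiftDenE horner_exp horner_prod; congr (_ ^+ _).
by apply: eq_bigr => t _; rewrite hornerD hornerX hornerC add0r.
Qed.

(* As p does not divide j + p t, this shows v_p(c + t) = -1. *)
Lemma den_rootE t : c + t%:R = (j + p * t)%N%:R / p%:R.
Proof. by rewrite /c natrD natrM; field; apply: natr_p_neq0. Qed.

Lemma den_root_neq0 t : c + t%:R != 0.
Proof.
by rewrite den_rootE mulf_neq0 ?invr_eq0 ?natr_p_neq0 // pnatr_eq0 addn_eq0 eqn0Ngt j_gt0.
Qed.

Lemma vp_ge_inv_den_root t : vp_ge 1 (c + t%:R)^-1.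
Proof.
have pNroot : ~~ (p %| j + p * t)%N.
  by rewrite dvdn_addl ?dvdn_mulr // (gtnNdvd j_gt0 j_lt_p).
rewrite den_rootE invf_div -[1]addr0; apply: vp_geM; last exact/vp_ge0P/p_integral_invn.
by have := vp_ge_expz 1; rewrite expr1z.
Qed.

Lemma shiftDen_coef0_neq0 : (shiftDen p s n j)`_0 != 0.
Proof. by rewrite shiftDen_coef0 expf_neq0 //; apply/prodf_neq0 => t _; apply: den_root_neq0. Qed.

Lemma vp_ge_inv_shiftDen_coef0 : vp_ge ((p - 1 + s) * n.+1)%N ((shiftDen p s n j)`_0)^-1.
Proof.
have := vp_geX (p - 1 + s) (vp_ge_prod n.+1 vp_ge_inv_den_root).
by rewrite mul1r prodfV exprVn -shiftDen_coef0 -PoszM mulnC.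
Qed.

Local Notation a := (series_quot (shiftNum p s n j) (shiftDen p s n j)).

Let A : int := (p * n + s * logn p n`!)%N%:Z - (M0 p s + (p - 2) * n)%N%:Z +
  ((p - 1 + s) * n.+1)%N%:Z.

Lemma vp_ge_shift_coef k : vp_ge (A + (k - n)%N%:Z) (a k).
Proof.
exact: vp_ge_series_quot coef_vp_ge_shiftNum coef_vp_ge_shiftDen vp_ge_inv_shiftDen_coef0 k.
Qed.

Lemma vp_ge_L1_term k :
  vp_ge (A + (k - n)%N%:Z - 1 - (logn p k.+1)%:Z) (a k * bernoulli k.+1 / k.+1%:R).
Proof.
apply: vp_geM (vp_ge_invn_logn (ltn0Sn k)).
exact: vp_geM (vp_ge_shift_coef k) (vp_ge_bernoulli _).
Qed.

Lemma in_Cdagger_shift : (2 < p)%N -> in_Cdagger p a.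
Proof.
move=> p_gt2; apply: (@in_Cdagger_vp_ge _ (A - n%:Z)) => // k.
by apply: vp_ge_le (vp_ge_shift_coef k); lia.
Qed.

Lemma padic_cauchy_L1_shift : padic_cauchy p (L1_partial a).
Proof.
apply: (padic_cauchy_vp_ge vp_ge_L1_term) => M.
exists (2 * (n + `|M - A|%N) + 5)%N => k Kk.
have := logn_double_leq k.+1; have : M - A <= `|M - A|%N by rewrite abszE ler_norm.
lia.
Qed.

Lemma vp_ge_L1_shift m : vp_ge (lemma6p1_bound p s n) (L1_partial a m).
Proof.
apply: vp_ge_sum => k _; apply: vp_ge_le (vp_ge_L1_term k).
have := logn_leq_trunc_logS n k.
have p_ge2 := prime_gt1 p_prime.
have : ((p + 1 + s) * n.+1 + (p - 2) * n = (p - 1 + s) * n.+1 + p * n + 2)%N by nia.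
rewrite /lemma6p1_bound /A; lia.
Qed.

End ShiftedRn.
End PadicValuation.

Theorem lemma6p1 (p s n j : nat) :
  prime p -> (5 <= p)%N -> (0 < s)%N -> ((p + s) ^ 4 < n)%N ->
  (1 <= j <= p - 1)%N ->
  exists a : nat -> rat,
    (* a = Taylor coefficients at 0 of t |-> R_n(t + j/p) *)
    (forall k : nat,
       \sum_(i < k.+1) (shiftDen p s n j)`_(k - i) * a i = (shiftNum p s n j)`_k) /\
    in_Cdagger p a /\
    padic_cauchy p (L1_partial a) /\
    exists K : nat, forall m : nat, (K <= m)%N ->
      L1_partial a m = 0 \/ lemma6p1_bound p s n <= vp p (L1_partial a m).
Proof.
move=> p_prime p_ge5 _ _ j_range.
exists (series_quot (shiftNum p s n j) (shiftDen p s n j)).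
split; first by move=> k; apply/series_quotP/shiftDen_coef0_neq0.
split; first by apply: in_Cdagger_shift => //; apply: leq_trans p_ge5.
split; first exact: padic_cauchy_L1_shift.
by exists 0%N => m _; apply/vp_ge_vp0/vp_ge_L1_shift.
Qed.
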